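(* Let $C=\mathbb{S}^1\times\mathbb{R}$ be the flat Euclidean cylinder and $f:C\to C$ a geodesic-preserving bijection. Then $f$ maps horizontal geodesics to horizontal geodesics.
   Context: $C$ carries the product of the flat metric on $\mathbb{S}^1=\mathbb{R}/\mathbb{Z}$ and the standard metric on $\mathbb{R}$. A geodesic is the image of a locally isometric immersion of the whole real line; a bijection (not assumed continuous) is geodesic-preserving if it maps every geodesic onto a geodesic as a set. Horizontal geodesics are the circles $\mathbb{S}^1\times\{r\}$. *)

From Stdlib Require Import Reals.
Open Scope R_scope.

(* Fractional part: frac x = x - floor x, in [0,1). Int_part is floor. *)
Definition frac (x : R) : R := x - IZR (Int_part x).

(* S^1 = R/Z, represented by canonical representatives in [0,1). *)
Definition S1 : Type := {x : R | 0 <= x < 1}.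

(* Flat (quotient) metric on R/Z: distance from a-b to the nearest integer. *)
Definition dS1 (a b : S1) : R :=
  let z := frac (proj1_sig a - proj1_sig b) in Rmin z (1 - z).

Definition Cyl : Type := (S1 * R)%type.

Definition dC (p q : Cyl) : R :=
  sqrt (dS1 (fst p) (fst q) ^ 2 + (snd p - snd q) ^ 2).

Definition local_isometry (g : R -> Cyl) : Prop :=
  forall t : R, exists eps : R, 0 < eps /\
    forall s s' : R, Rabs (s - t) < eps -> Rabs (s' - t) < eps ->
      dC (g s) (g s') = Rabs (s - s').

Definition is_geodesic (G : Cyl -> Prop) : Prop :=
  exists g : R -> Cyl, local_isometry g /\
    forall p : Cyl, G p <-> exists t : R, g t = p.

Definition image (f : Cyl -> Cyl) (G : Cyl -> Prop) : Cyl -> Prop :=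
  fun q => exists p, G p /\ f p = q.

Definition horizontal (G : Cyl -> Prop) : Prop :=
  exists r : R, forall p : Cyl, G p <-> snd p = r.

Definition bijective_map (f : Cyl -> Cyl) : Prop :=
  (forall x y, f x = f y -> x = y) /\ (forall y, exists x, f x = y).

Definition geodesic_preserving (f : Cyl -> Cyl) : Prop :=
  forall G, is_geodesic G -> is_geodesic (image f G).

From Stdlib Require Import Reals Lra Lia ClassicalEpsilon ProofIrrelevance.
Open Scope R_scope.

(* The geodesics of the flat cylinder are exactly the helices
   t |-> (c + a t mod 1, r + b t) with a^2 + b^2 = 1: on short intervals a local
   isometry lifts to a distance-preserving map of an interval into the Euclidean
   plane, which is affine, and the resulting velocity is locally constant, hence
   constant.  So a geodesic is either a horizontal circle or slanted (b <> 0), and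
   two slanted geodesics through a common point meet again.  If f sent a horizontal
   circle G to a slanted geodesic, the image of the vertical line through a point of
   G could not be slanted (G and the line meet once), so it would be horizontal; but
   then a helix meeting the vertical line twice is mapped onto that same circle, and
   f would send a point off the line into the image of the line. *)

Definition cong1 (x y : R) : Prop := exists n : Z, x - y = IZR n.

Lemma cong1_refl x : cong1 x x.
Proof. exists 0%Z. simpl. ring. Qed.

Lemma cong1_sym x y : cong1 x y -> cong1 y x.
Proof. intros [n Hn]. exists (- n)%Z. rewrite opp_IZR. lra. Qed.

Lemma cong1_trans x y z : cong1 x y -> cong1 y z -> cong1 x z.
Proof.
  intros [n Hn] [m Hm]. exists (n + m)%Z. rewrite plus_IZR. lra.
Qed.

Lemma frac_range x : 0 <= frac x < 1.
Proof. unfold frac. destruct (base_Int_part x). lra. Qed.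

Lemma frac_id x : 0 <= x < 1 -> frac x = x.
Proof.
  intros Hx. unfold frac. rewrite <- (Int_part_spec x 0) by (simpl; lra). simpl. ring.
Qed.

Lemma cong1_frac x y : cong1 x y <-> frac x = frac y.
Proof.
  split.
  - intros [n Hn]. unfold frac.
    rewrite <- (Int_part_spec x (Int_part y + n)); [rewrite plus_IZR; lra|].
    rewrite plus_IZR. destruct (base_Int_part y). lra.
  - unfold frac. intros H. exists (Int_part x - Int_part y)%Z. rewrite minus_IZR. lra.
Qed.

Lemma int_abs_lt1 n : Rabs (IZR n) < 1 -> n = 0%Z.
Proof.
  intros H. apply Rabs_def2 in H. destruct H as [H1 H2].
  assert (L : (n < 1)%Z) by (apply lt_IZR; exact H1).
  assert (U : (-1 < n)%Z) by (apply lt_IZR; simpl; lra).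
  lia.
Qed.

Lemma cong1_small x y : cong1 x y -> Rabs (x - y) < 1 -> x = y.
Proof.
  intros [n Hn] H. rewrite Hn in H. apply int_abs_lt1 in H. subst n. simpl in Hn. lra.
Qed.

(* [dS1 a b] unfolds to [dZ (proj1_sig a - proj1_sig b)]. *)
Definition dZ (x : R) : R := Rmin (frac x) (1 - frac x).

Lemma dZ_cong1 x y : cong1 x y -> dZ x = dZ y.
Proof. intros H. unfold dZ. rewrite (proj1 (cong1_frac x y) H). reflexivity. Qed.

Lemma dZ_small x : Rabs x <= 1/2 -> dZ x = Rabs x.
Proof.
  intros Hx. unfold dZ.
  destruct (Rle_dec 0 x) as [Hx0|Hx0].
  - rewrite Rabs_right in * by lra. rewrite frac_id by lra. apply Rmin_left. lra.
  - rewrite Rabs_left in * by lra. assert (E : frac x = x + 1).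
    { rewrite <- (frac_id (x + 1)) by lra. apply cong1_frac. exists (-1)%Z. simpl. lra. }
    rewrite E, Rmin_right; lra.
Qed.

Definition centered_rep (x : R) : R := x - IZR (Int_part (x + 1/2)).

Lemma centered_rep_cong1 x : cong1 x (centered_rep x).
Proof. exists (Int_part (x + 1/2)). unfold centered_rep. ring. Qed.

Lemma centered_rep_bound x : Rabs (centered_rep x) <= 1/2.
Proof.
  unfold centered_rep. destruct (base_Int_part (x + 1/2)). apply Rabs_le. lra.
Qed.

Lemma locally_constant_constant (F : R -> R) :
  (forall t, exists e, 0 < e /\ forall s, Rabs (s - t) < e -> F s = F t) ->
  forall a b, F a = F b.
Proof.
  intros H.
  assert (D : forall t, derivable_pt_lim F t 0).
  { intros t eps Heps. destruct (H t) as [e [He HF]].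
    exists (mkposreal e He). intros h Hh Hlt. simpl in Hlt.
    rewrite (HF (t + h)) by (replace (t + h - t) with h by ring; exact Hlt).
    replace ((F t - F t) / h - 0) with 0 by (field; exact Hh).
    rewrite Rabs_R0. exact Heps. }
  intros a b. apply (null_derivative_1 F (fun t => exist _ 0 (D t))). reflexivity.
Qed.

Lemma euclid_dist_collinear u1 u2 w1 w2 s d :
  u1^2 + u2^2 = s^2 -> w1^2 + w2^2 = d^2 -> (u1 - w1)^2 + (u2 - w2)^2 = (s - d)^2 ->
  d * u1 = s * w1 /\ d * u2 = s * w2.
Proof.
  intros Hu Hw Huw.
  assert (P : u1 * w1 + u2 * w2 = s * d) by nra.
  assert (Z : Rsqr (d * u1 - s * w1) + Rsqr (d * u2 - s * w2) = 0).
  { unfold Rsqr.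
    replace ((d * u1 - s * w1) * (d * u1 - s * w1) + (d * u2 - s * w2) * (d * u2 - s * w2))
      with (d^2 * (u1^2 + u2^2) - 2 * d * s * (u1 * w1 + u2 * w2) + s^2 * (w1^2 + w2^2))
      by ring.
    rewrite Hu, Hw, P. ring. }
  apply Rplus_sqr_eq_0 in Z. lra.
Qed.

Definition xs (p : Cyl) : R := proj1_sig (fst p).

Lemma xs_range p : 0 <= xs p < 1.
Proof. exact (proj2_sig (fst p)). Qed.

Lemma cyl_ext p q : xs p = xs q -> snd p = snd q -> p = q.
Proof.
  destruct p as [[x hx] y], q as [[x' hx'] y']. unfold xs; simpl. intros -> ->.
  f_equal. f_equal. apply proof_irrelevance.
Qed.

Lemma dC_sq p q : dC p q ^ 2 = dZ (xs p - xs q) ^ 2 + (snd p - snd q) ^ 2.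
Proof.
  apply pow2_sqrt. apply Rplus_le_le_0_compat; apply pow2_ge_0.
Qed.

Definition helix (c a b r t : R) : Cyl :=
  (exist (fun x => 0 <= x < 1) (frac (c + a * t)) (frac_range (c + a * t)), r + b * t).

Lemma xs_helix c a b r t : xs (helix c a b r t) = frac (c + a * t).
Proof. reflexivity. Qed.

Lemma helix_eq c a b r t p :
  helix c a b r t = p <-> xs p = frac (c + a * t) /\ snd p = r + b * t.
Proof.
  split.
  - intros <-. split; reflexivity.
  - intros [Hx Hy]. apply cyl_ext; symmetry; assumption.
Qed.

Lemma helix_local_isometry c a b r : a^2 + b^2 = 1 -> local_isometry (helix c a b r).
Proof.
  intros E t. exists (1/4). split; [lra|]. intros s s' Hs Hs'.
  apply Rabs_def2 in Hs. apply Rabs_def2 in Hs'.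
  assert (Ha : Rabs a <= 1).
  { apply Rabs_le. assert (0 <= b^2) by apply pow2_ge_0. nra. }
  assert (Hss : Rabs (s - s') <= 1/2) by (apply Rabs_le; lra).
  assert (Dx : dZ (xs (helix c a b r s) - xs (helix c a b r s')) = Rabs (a * (s - s'))).
  { rewrite <- dZ_small.
    - apply dZ_cong1. rewrite !xs_helix. apply (cong1_trans _ ((c + a * s) - (c + a * s'))).
      + exists (Int_part (c + a * s') - Int_part (c + a * s))%Z.
        unfold frac. rewrite minus_IZR. ring.
      + replace (c + a * s - (c + a * s')) with (a * (s - s')) by ring. apply cong1_refl.
    - rewrite Rabs_mult.
      assert (0 <= Rabs (s - s')) by apply Rabs_pos. nra. }
  unfold dC. change (dS1 (fst (helix c a b r s)) (fst (helix c a b r s')))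
    with (dZ (xs (helix c a b r s) - xs (helix c a b r s'))).
  rewrite Dx, pow2_abs, <- sqrt_pow2 by apply Rabs_pos. f_equal.
  rewrite pow2_abs. simpl snd. replace (r + b * s - (r + b * s')) with (b * (s - s')) by ring.
  transitivity ((a^2 + b^2) * (s - s')^2); [ring | rewrite E; ring].
Qed.

Lemma local_isometry_chart g : local_isometry g -> forall t, exists e (X : R -> R), 0 < e /\
  (forall s, cong1 (xs (g s)) (X s)) /\
  (forall s s', Rabs (s - t) < e -> Rabs (s' - t) < e ->
     (X s - X s') ^ 2 + (snd (g s) - snd (g s')) ^ 2 = (s - s') ^ 2).
Proof.
  intros Hg t. destruct (Hg t) as [e0 [He0 Hiso]].
  set (e := Rmin e0 (1/8)).
  assert (He : 0 < e <= 1/8) by (split; [apply Rmin_glb_lt | apply Rmin_r]; lra).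
  assert (Hsq : forall s s', Rabs (s - t) < e -> Rabs (s' - t) < e ->
     dZ (xs (g s) - xs (g s')) ^ 2 + (snd (g s) - snd (g s')) ^ 2 = (s - s') ^ 2).
  { intros s s' Hs Hs'. assert (e <= e0) by apply Rmin_l.
    rewrite <- dC_sq, Hiso by lra. apply pow2_abs. }
  (* Lift the angle near [xs (g t)]; on a window of radius 1/8 all lifted differences
     stay below 1/2, where [dZ] is the absolute value. *)
  set (X := fun s => xs (g t) + centered_rep (xs (g s) - xs (g t))).
  assert (HX : forall s, cong1 (xs (g s)) (X s)).
  { intros s. destruct (centered_rep_cong1 (xs (g s) - xs (g t))) as [n Hn].
    exists n. unfold X. lra. }
  assert (Hnear : forall s, Rabs (s - t) < e -> Rabs (X s - xs (g t)) < 1/8).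
  { intros s Hs. unfold X. replace (xs (g t) + _ - xs (g t))
      with (centered_rep (xs (g s) - xs (g t))) by ring.
    rewrite <- dZ_small by apply centered_rep_bound.
    rewrite <- (dZ_cong1 _ _ (centered_rep_cong1 _)).
    assert (Hd := Hsq s t Hs ltac:(rewrite Rminus_diag, Rabs_R0; lra)).
    rewrite <- (pow2_abs (s - t)) in Hd.
    assert (0 <= dZ (xs (g s) - xs (g t))).
    { unfold dZ. destruct (frac_range (xs (g s) - xs (g t))). apply Rmin_glb; lra. }
    assert (0 <= (snd (g s) - snd (g t)) ^ 2) by apply pow2_ge_0.
    assert (0 <= Rabs (s - t)) by apply Rabs_pos.
    nra. }
  exists e, X. split; [lra | split; [exact HX |]].
  intros s s' Hs Hs'.
  assert (D : dZ (xs (g s) - xs (g s')) = Rabs (X s - X s')).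
  { rewrite <- dZ_small.
    - apply dZ_cong1. destruct (HX s) as [n Hn]. destruct (HX s') as [m Hm].
      exists (n - m)%Z. rewrite minus_IZR. lra.
    - assert (H1 := Hnear s Hs). assert (H2 := Hnear s' Hs').
      apply Rabs_def2 in H1. apply Rabs_def2 in H2. apply Rabs_le. lra. }
  rewrite <- (Hsq s s' Hs Hs'), D, pow2_abs. reflexivity.
Qed.

Definition unit_velocity (g : R -> Cyl) (t a b : R) : Prop :=
  a ^ 2 + b ^ 2 = 1 /\ exists e, 0 < e /\ forall s, Rabs (s - t) < e ->
    cong1 (xs (g s)) (xs (g t) + a * (s - t)) /\ snd (g s) = snd (g t) + b * (s - t).

Lemma local_isometry_unit_velocity g t :
  local_isometry g -> exists a b, unit_velocity g t a b.
Proof.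
  intros Hg. destruct (local_isometry_chart g Hg t) as [e [X [He [HX Hd]]]].
  set (d := e / 2).
  assert (Ht : Rabs (t - t) < e) by (rewrite Rminus_diag, Rabs_R0; lra).
  assert (Ht1 : Rabs (t + d - t) < e) by (unfold d; rewrite Rabs_right; lra).
  assert (Hw := Hd (t + d) t Ht1 Ht).
  replace (t + d - t) with d in Hw by ring.
  exists ((X (t + d) - X t) / d), ((snd (g (t + d)) - snd (g t)) / d).
  split.
  { unfold Rdiv. rewrite !Rpow_mult_distr, <- Rmult_plus_distr_r, Hw.
    rewrite pow_inv. apply Rinv_r. apply pow_nonzero. unfold d. lra. }
  exists e. split; [exact He|]. intros s Hs.
  destruct (euclid_dist_collinear (X s - X t) (snd (g s) - snd (g t))
              (X (t + d) - X t) (snd (g (t + d)) - snd (g t)) (s - t) d)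
    as [Ex Ey].
  - apply Hd; assumption.
  - exact Hw.
  - replace (s - t - d) with (s - (t + d)) by ring.
    rewrite <- (Hd s (t + d) Hs Ht1). f_equal; f_equal; ring.
  - split.
    + destruct (HX s) as [n Hn]. destruct (HX t) as [m Hm].
      exists (n - m)%Z. rewrite minus_IZR.
      replace ((X (t + d) - X t) / d * (s - t)) with (X s - X t)
        by (apply (Rmult_eq_reg_l d); [rewrite Ex; field|]; unfold d; lra).
      lra.
    + apply (Rmult_eq_reg_l d); [|unfold d; lra].
      replace (d * (snd (g t) + (snd (g (t + d)) - snd (g t)) / d * (s - t)))
        with (d * snd (g t) + (s - t) * (snd (g (t + d)) - snd (g t)))
        by (field; unfold d; lra).
      lra.
Qed.

Lemma unit_velocity_unique g t a b a' b' :
  unit_velocity g t a b -> unit_velocity g t a' b' -> a = a' /\ b = b'.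
Proof.
  intros [E [e [He H]]] [E' [e' [He' H']]].
  set (d := Rmin (Rmin e e') (1/4) / 2).
  assert (Hd : 0 < d <= 1/8 /\ d < e /\ d < e').
  { unfold d. pose proof (Rmin_l (Rmin e e') (1/4)). pose proof (Rmin_r (Rmin e e') (1/4)).
    pose proof (Rmin_l e e'). pose proof (Rmin_r e e').
    assert (0 < Rmin (Rmin e e') (1/4)) by (repeat apply Rmin_glb_lt; lra). lra. }
  assert (Hs : Rabs (t + d - t) = d) by (rewrite Rabs_right; lra).
  destruct (H (t + d) ltac:(lra)) as [Cx Cy].
  destruct (H' (t + d) ltac:(lra)) as [Cx' Cy'].
  replace (t + d - t) with d in * by ring.
  assert (Ea : xs (g t) + a * d = xs (g t) + a' * d).
  { apply cong1_small.
    - exact (cong1_trans _ _ _ (cong1_sym _ _ Cx) Cx').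
    - assert (0 <= b ^ 2) by apply pow2_ge_0. assert (0 <= b' ^ 2) by apply pow2_ge_0.
      assert (-1 <= a <= 1) by (split; nra). assert (-1 <= a' <= 1) by (split; nra).
      replace (xs (g t) + a * d - (xs (g t) + a' * d)) with ((a - a') * d) by ring.
      apply Rabs_def1; nra. }
  split; apply (Rmult_eq_reg_r d); lra.
Qed.

Lemma unit_velocity_near g t a b : unit_velocity g t a b ->
  exists e, 0 < e /\ forall s, Rabs (s - t) < e -> unit_velocity g s a b.
Proof.
  intros [E [e [He H]]]. exists (e / 2). split; [lra|].
  intros s Hs. split; [exact E|]. exists (e / 2). split; [lra|].
  intros u Hu.
  assert (Hut : Rabs (u - t) < e).
  { replace (u - t) with ((u - s) + (s - t)) by ring.
    apply Rle_lt_trans with (Rabs (u - s) + Rabs (s - t)); [apply Rabs_triang | lra]. }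
  assert (Hst : Rabs (s - t) < e) by lra.
  destruct (H u Hut) as [[n Hn] Hu2]. destruct (H s Hst) as [[m Hm] Hs2].
  split.
  - exists (n - m)%Z. rewrite minus_IZR. lra.
  - rewrite Hu2, Hs2. ring.
Qed.

Lemma local_isometry_constant_velocity g : local_isometry g ->
  exists a b, forall t, unit_velocity g t a b.
Proof.
  intros Hg.
  destruct (choice (fun t v => unit_velocity g t (fst v) (snd v))) as [V HV].
  { intros t. destruct (local_isometry_unit_velocity g t Hg) as [a [b H]].
    exists (a, b). exact H. }
  assert (Vnear : forall t, exists e, 0 < e /\ forall s, Rabs (s - t) < e -> V s = V t).
  { intros t. destruct (unit_velocity_near _ _ _ _ (HV t)) as [e [He H]].
    exists e. split; [exact He|]. intros s Hs.
    destruct (unit_velocity_unique _ _ _ _ _ _ (HV s) (H s Hs)) as [Ea Eb].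
    destruct (V s), (V t). simpl in *. congruence. }
  assert (Vconst : forall t, V t = V 0).
  { intros t. apply injective_projections;
      [apply (locally_constant_constant (fun s => fst (V s)))
      |apply (locally_constant_constant (fun s => snd (V s)))]; intros u;
      destruct (Vnear u) as [e [He H]]; exists e; split; auto;
      intros s Hs; rewrite (H s Hs); reflexivity. }
  exists (fst (V 0)), (snd (V 0)). intros t. rewrite <- (Vconst t). apply HV.
Qed.

Lemma local_isometry_helix g : local_isometry g ->
  exists c a b r, a ^ 2 + b ^ 2 = 1 /\ forall t, g t = helix c a b r t.
Proof.
  intros Hg. destruct (local_isometry_constant_velocity g Hg) as [a [b Hvel]].
  assert (Hx : forall t, frac (xs (g t) - a * t) = frac (xs (g 0) - a * 0)).
  { intros t0. apply (locally_constant_constant (fun t => frac (xs (g t) - a * t))).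
    intros t. destruct (Hvel t) as [_ [e [He H]]]. exists e. split; [exact He|].
    intros s Hs. apply cong1_frac. destruct (H s Hs) as [[n Hn] _].
    exists n. lra. }
  assert (Hy : forall t, snd (g t) - b * t = snd (g 0) - b * 0).
  { intros t0. apply (locally_constant_constant (fun t => snd (g t) - b * t)). intros t.
    destruct (Hvel t) as [_ [e [He H]]]. exists e. split; [exact He|].
    intros s Hs. destruct (H s Hs) as [_ Hs']. rewrite Hs'. ring. }
  exists (xs (g 0)), a, b, (snd (g 0)). split; [exact (proj1 (Hvel 0))|].
  intros t. symmetry. apply helix_eq. split.
  - rewrite <- (frac_id (xs (g t))) by apply xs_range.
    apply cong1_frac. destruct (proj2 (cong1_frac _ _) (Hx t)) as [n Hn].
    exists n. lra.
  - specialize (Hy t). lra.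
Qed.

Definition helix_set (c a b r : R) (p : Cyl) : Prop := exists t, helix c a b r t = p.

Lemma helix_set_geodesic c a b r : a ^ 2 + b ^ 2 = 1 -> is_geodesic (helix_set c a b r).
Proof.
  intros E. exists (helix c a b r). split; [exact (helix_local_isometry c a b r E)|].
  intros p. reflexivity.
Qed.

Lemma geodesic_helix_set G : is_geodesic G ->
  exists c a b r, a ^ 2 + b ^ 2 = 1 /\ forall p, G p <-> helix_set c a b r p.
Proof.
  intros [g [Hg HG]]. destruct (local_isometry_helix g Hg) as [c [a [b [r [E H]]]]].
  exists c, a, b, r. split; [exact E|]. intros p. rewrite HG.
  split; intros [t Ht]; exists t; rewrite H in *; exact Ht.
Qed.

Lemma helix_set_flat c a r p : a <> 0 -> helix_set c a 0 r p <-> snd p = r.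
Proof.
  intros Ha. split.
  - intros [t Ht]. apply helix_eq in Ht. lra.
  - intros Hp. exists ((xs p - c) / a). apply helix_eq. split.
    + replace (c + a * ((xs p - c) / a)) with (xs p) by (field; exact Ha).
      symmetry. apply frac_id, xs_range.
    + lra.
Qed.

Lemma horizontal_geodesic G : horizontal G -> is_geodesic G.
Proof.
  intros [r H]. destruct (helix_set_geodesic 0 1 0 r ltac:(lra)) as [g [Hg Eg]].
  exists g. split; [exact Hg|]. intros p. rewrite H, <- (helix_set_flat 0 1 r p) by lra.
  apply Eg.
Qed.

Definition slanted (G : Cyl -> Prop) : Prop :=
  exists c a b r, b <> 0 /\ forall p, G p <-> helix_set c a b r p.

Lemma geodesic_horizontal_or_slanted G : is_geodesic G -> horizontal G \/ slanted G.
Proof.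
  intros HG. destruct (geodesic_helix_set G HG) as [c [a [b [r [E H]]]]].
  destruct (Req_dec b 0) as [->|Hb].
  - left. exists r. intros p. rewrite H. apply helix_set_flat. intros ->. lra.
  - right. exists c, a, b, r. split; assumption.
Qed.

Lemma slanted_height_inj G p q : slanted G -> G p -> G q -> snd p = snd q -> p = q.
Proof.
  intros [c [a [b [r [Hb H]]]]] Hp Hq E.
  apply H in Hp as [t <-]. apply H in Hq as [u <-].
  simpl in E. replace u with t by (apply (Rmult_eq_reg_l b); lra). reflexivity.
Qed.

Lemma slanted_meet_twice G1 G2 q : slanted G1 -> slanted G2 -> G1 q -> G2 q ->
  exists q', G1 q' /\ G2 q' /\ q' <> q.
Proof.
  intros [c1 [a1 [b1 [r1 [Hb1 H1]]]]] [c2 [a2 [b2 [r2 [Hb2 H2]]]]] Q1 Q2.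
  apply H1 in Q1 as [t1 Q1]. apply H2 in Q2 as [t2 Q2].
  rewrite <- Q2 in Q1. apply helix_eq in Q1. rewrite xs_helix in Q1. simpl in Q1.
  destruct Q1 as [Qx Qy].
  (* Along the two helices, parametrised by height, the horizontal offset drifts at
     the constant rate [k]; after a height change [b1 * tau] with [k * tau] an integer
     they meet again. *)
  set (k := a1 - a2 * b1 / b2).
  assert (Htau : exists tau m, tau <> 0 /\ tau * k = IZR m).
  { destruct (Req_dec k 0) as [Hk|Hk].
    - exists 1, 0%Z. split; [lra|]. rewrite Hk. simpl. ring.
    - exists (/ k), 1%Z. split; [apply Rinv_neq_0_compat; exact Hk|].
      simpl. field. exact Hk. }
  destruct Htau as [tau [m [Htau Hm]]].
  destruct (proj2 (cong1_frac _ _) Qx) as [n Hn].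
  exists (helix c1 a1 b1 r1 (t1 + tau)). split; [|split].
  - apply H1. exists (t1 + tau). reflexivity.
  - apply H2. exists (t2 + b1 * tau / b2). apply helix_eq. split.
    + rewrite xs_helix. apply cong1_frac. exists (m - n)%Z. rewrite minus_IZR, <- Hn, <- Hm.
      unfold k. field. exact Hb2.
    + simpl. field_simplify; [|exact Hb2]. lra.
  - rewrite <- Q2. intros E. apply (f_equal snd) in E. simpl in E.
    apply Htau. apply (Rmult_eq_reg_l b1); lra.
Qed.

Definition vertical_line : Cyl -> Prop := helix_set 0 0 1 0.

Lemma image_vertical_line_not_horizontal f :
  (forall x y, f x = f y -> x = y) -> geodesic_preserving f ->
  ~ horizontal (image f vertical_line).
Proof.
  intros Inj GP [h Hh].
  (* The helix of slope 4/3 through the origin meets the vertical line at heights 0 and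
     4/3; their images lie on the horizontal circle, so the image of the helix is
     that same circle, and it contains the image of a point off the vertical line. *)
  set (X := helix_set 0 (3/5) (4/5) 0).
  set (x1 := helix 0 (3/5) (4/5) 0 0).
  set (x2 := helix 0 (3/5) (4/5) 0 (5/3)).
  set (y := helix 0 (3/5) (4/5) 0 1).
  assert (Vx1 : vertical_line x1).
  { exists 0. apply helix_eq. unfold x1. rewrite xs_helix. split; [f_equal | simpl]; ring. }
  assert (Vx2 : vertical_line x2).
  { exists (4/3). apply helix_eq. unfold x2. rewrite xs_helix. split.
    - apply cong1_frac. exists 1%Z. simpl. field.
    - simpl. field. }
  assert (Hx1 : snd (f x1) = h) by (apply Hh; exists x1; auto).
  assert (Hx2 : snd (f x2) = h) by (apply Hh; exists x2; auto).
  assert (N12 : f x1 <> f x2).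
  { intros E. apply Inj, (f_equal snd) in E. unfold x1, x2 in E. simpl in E. lra. }
  assert (GX : is_geodesic (image f X)) by (apply GP, helix_set_geodesic; lra).
  destruct (geodesic_horizontal_or_slanted _ GX) as [[h' Hh'] | SX].
  2:{ apply N12. apply (slanted_height_inj _ _ _ SX);
        [exists x1 | exists x2 | congruence]; split; auto; [exists 0 | exists (5/3)]; reflexivity. }
  assert (Hy : snd (f y) = h).
  { rewrite <- Hx1. transitivity h'; [|symmetry]; apply Hh'.
    - exists y. split; [exists 1|]; reflexivity.
    - exists x1. split; [exists 0|]; reflexivity. }
  apply Hh in Hy as [v [Vv Ev]]. apply Inj in Ev. subst v. destruct Vv as [t Vt].
  apply (f_equal xs) in Vt. unfold y in Vt. rewrite !xs_helix in Vt.
  rewrite !frac_id in Vt; lra.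
Qed.

Theorem lemma4p2 (f : Cyl -> Cyl) :
  bijective_map f -> geodesic_preserving f ->
  forall G : Cyl -> Prop, horizontal G -> horizontal (image f G).
Proof.
  intros [Inj _] GP G HG.
  destruct (geodesic_horizontal_or_slanted _ (GP G (horizontal_geodesic G HG)))
    as [? | SG]; [assumption | exfalso].
  destruct (geodesic_horizontal_or_slanted _
              (GP vertical_line (helix_set_geodesic 0 0 1 0 ltac:(lra)))) as [HV | SV].
  { exact (image_vertical_line_not_horizontal f Inj GP HV). }
  (* G and the vertical line meet only at p0, but their slanted images meet twice. *)
  destruct HG as [r HG]. set (p0 := helix 0 0 1 0 r).
  assert (Gp0 : G p0) by (apply HG; simpl; ring).
  destruct (slanted_meet_twice _ _ (f p0) SG SV) as [q [[g1 [Gg1 Eg1]] [[v1 [Vv1 Ev1]] Nq]]].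
  - exists p0. auto.
  - exists p0. split; [exists r|]; reflexivity.
  - assert (v1 = g1) by (apply Inj; congruence). subst v1.
    apply Nq. rewrite <- Eg1. f_equal.
    destruct Vv1 as [t <-]. apply HG in Gg1. simpl in Gg1.
    unfold p0. f_equal. lra.
Qed.
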